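(* Let $H\Gamma=(C,\{\mathcal W,\mathcal X,\mathcal Y,\mathcal Z\},G_{zx},G_{wy})$ be a Lagrangian hypercube diagram and $L$ the embedded Legendrian torus obtained as the lift of the Lagrangian torus it determines, with $H_1(L)=\langle\tilde\gamma_{zx},\tilde\gamma_{wy}\rangle$. Then for $A=a[\tilde\gamma_{zx}]+b[\tilde\gamma_{wy}]\in H_1(L)$, $(a,b)\in\mathbb{Z}^2$, the Maslov index is $$\mu(A)=2a\,w(G_{zx})+2b\,w(G_{wy}),$$ where $w(G)=\frac14(\#\text{counterclockwise corners of }G-\#\text{clockwise corners of }G)$.
   Context: Grid conventions. In a plane with coordinates $(a,b)$ (below $(a,b)=(w,y)$ or $(a,b)=(z,x)$), an immersed grid diagram of size $n$ is an $n\times n$ grid of unit cells in $[0,n]^2$ with two kinds of markings at centers of cells, each row and each column containing exactly one marking of each kind; joining each marking of the first kind to the marking of the second kind in its row by an $a$-parallel segment, and each marking of the second kind to the marking of the first kind in its column by a $b$-parallel segment, gives an oriented connected closed piecewise-linear curve, with no crossing information recorded, viewed as an immersion $\gamma:\mathbb{R}/2\pi\mathbb{Z}\to\mathbb{R}^2$, $\theta\mapsto(a(\theta),b(\theta))$. It is a Lagrangian grid diagram if (1) $\int_0^{2\pi}b\,a'\,d\theta=0$ and (2) $\int_{\theta_0}^{\theta_1}b\,a'\,d\theta\neq0$ whenever $\theta_0\neq\theta_1$ and $\gamma(\theta_0)=\gamma(\theta_1)$. For a crossing $c=\gamma(\theta_0)=\gamma(\theta_1)$ put $|\Delta t(c)|=|\int_{\theta_0}^{\theta_1}b\,a'\,d\theta|$.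 The corners are the markings; a corner is counterclockwise (resp. clockwise) if the curve turns left (resp. right) there relative to the orientation of the $(a,b)$-plane. Hypercube diagrams. Let $C=[0,n]^4$ with coordinates $(w,x,y,z)$. A flat is a product in which two coordinates range over $[0,n]$ and the other two over unit intervals $[k,k+1]$, named by its two full coordinates; a cube is a product in which three coordinates range over $[0,n]$ and one over a unit interval. Markings are points with coordinates in $\mathbb{Z}+\frac12$ labelled $W,X,Y,Z$. Marking conditions: each cube contains exactly one marking of each label; each cube contains exactly two flats containing exactly three markings; in each such flat the three markings form a right angle with rays parallel to coordinate axes; its vertex is $W$ iff the flat is a $zw$-flat, $X$ iff a $wx$-flat, $Y$ iff an $xy$-flat, $Z$ iff a $yz$-flat. Join each $W$ to an $X$ by a $w$-parallel segment, each $X$ to a $Y$ by an $x$-parallel segment, each $Y$ to a $Z$ by a $y$-parallel segment and each $Z$ to a $W$ by a $z$-parallel segment; the projections of this oriented curve to the $(w,y)$- and $(z,x)$-planes are immersed grid diagrams $G_{wy}$ ($(a,b)=(w,y)$) and $G_{zx}$ ($(a,b)=(z,x)$). $H\Gamma$ is a Lagrangian hypercube diagram if the marking conditions hold, $G_{wy},G_{zx}$ are Lagrangian grid diagrams, and $|\Delta t(c)|\neq|\Delta t(c')|$ for all crossings $c$ of $G_{zx}$ and $c'$ of $G_{wy}$. Torus and lift. With $G_{zx}$ parametrized by $s\mapsto(z(s),x(s))$ and $G_{wy}$ by $u\mapsto(w(u),y(u))$ (corners slightly smoothed preserving (1),(2)), the torus is $i(s,u)=(w(u),x(s),y(u),z(s))$,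 Lagrangian for $\omega=dw\wedge dy+dz\wedge dx$, with loops $\gamma_{zx}=S^1\times\{1\}$, $\gamma_{wy}=\{1\}\times S^1$. In $\mathbb{R}^5$ with coordinates $(w,x,y,z,t)$ and contact form $dt-y\,dw-x\,dz$, the lift is $L=\{(i(p),t(p))\}$, $t(p)=t_0+\int_\gamma(y\,dw+x\,dz)$ along a path $\gamma$ from a base point to $p$; $\tilde\gamma_{zx},\tilde\gamma_{wy}$ are the lifts of the loops. The Maslov index $\mu:H_1(L)\to\mathbb{Z}$ assigns to a loop the Maslov index of the loop of (unoriented) Lagrangian tangent planes of $i$ along its projection, in the Lagrangian Grassmannian of $(\mathbb{R}^4,\omega)$. *)

From Stdlib Require Import Reals Lra Lia ZArith Arith List Bool.
From Coquelicot Require Import Coquelicot.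
Open Scope R_scope.
Local Open Scope bool_scope.

Definition cnt (p : nat -> bool) (N : nat) : nat := length (filter p (seq 0 N)).

(* Coordinates are indexed w=0, x=1, y=2, z=3; labels W=0, X=1, Y=2, Z=3.
   A marking with cell indices (k_w,k_x,k_y,k_z) sits at the point
   (k_w+1/2, ..., k_z+1/2).  The oriented closed curve obtained by joining
   W->X (w-parallel), X->Y (x-parallel), Y->Z (y-parallel), Z->W (z-parallel)
   is recorded as the cyclic sequence P 0, P 1, ..., P (4n-1) of its
   markings (P j c = cell index of coordinate c of the j-th marking, whose
   label is j mod 4).  Since the projections must be connected curves,
   the joined curve is a single cycle through all 4n markings.            *)

Definition flat_count (n : nat) (P : nat -> nat -> nat) (c k c' k' : nat) : nat :=
  cnt (fun j => Nat.eqb (P j c) k && Nat.eqb (P j c') k') (4 * n).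

Definition in_flat (P : nat -> nat -> nat) (c k c' k' j : nat) : Prop :=
  P j c = k /\ P j c' = k'.

Definition hypercube_marking_conditions (n : nat) (P : nat -> nat -> nat) : Prop :=
  (1 <= n)%nat /\
  (forall j c, (c < 4)%nat -> (P j c < n)%nat) /\
  (forall j c, P (j + 4 * n)%nat c = P j c) /\
  (forall j c, (c < 4)%nat -> c <> (j mod 4)%nat -> P (S j) c = P j c) /\
  (forall c l k, (c < 4)%nat -> (l < 4)%nat -> (k < n)%nat ->
     cnt (fun j => Nat.eqb (j mod 4) l && Nat.eqb (P j c) k) (4 * n) = 1%nat) /\
  (* each cube {coord c = k} contains exactly two flats with exactly three
     markings; the flats of that cube are {coord c = k, coord c' = k'},
     c' <> c, encoded by q = c' * n + k' *)
  (forall c k, (c < 4)%nat -> (k < n)%nat ->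
     cnt (fun q => negb (Nat.eqb (q / n) c) &&
                   Nat.eqb (flat_count n P c k (q / n) (q mod n)) 3) (4 * n) = 2%nat) /\
  (* right-angle condition: in a flat with three markings, they form a
     right angle with rays parallel to the axes; the vertex has label l
     with: W iff zw-flat, X iff wx-flat, Y iff xy-flat, Z iff yz-flat,
     i.e. the fixed coordinates are {l+1, l+2} (mod 4) and the rays are
     along the axes l and l+3 (mod 4). *)
  (forall c k c' k', (c < 4)%nat -> (c' < 4)%nat -> c <> c' ->
     (k < n)%nat -> (k' < n)%nat -> flat_count n P c k c' k' = 3%nat ->
     exists j0 j1 j2,
       (j0 < 4 * n)%nat /\ (j1 < 4 * n)%nat /\ (j2 < 4 * n)%nat /\
       j0 <> j1 /\ j0 <> j2 /\ j1 <> j2 /\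
       in_flat P c k c' k' j0 /\ in_flat P c k c' k' j1 /\ in_flat P c k c' k' j2 /\
       let l := (j0 mod 4)%nat in
       ((c = ((l + 1) mod 4)%nat /\ c' = ((l + 2) mod 4)%nat) \/
        (c = ((l + 2) mod 4)%nat /\ c' = ((l + 1) mod 4)%nat)) /\
       (forall d, (d < 4)%nat -> d <> l -> P j1 d = P j0 d) /\ P j1 l <> P j0 l /\
       (forall d, (d < 4)%nat -> d <> ((l + 3) mod 4)%nat -> P j2 d = P j0 d) /\
       P j2 ((l + 3) mod 4)%nat <> P j0 ((l + 3) mod 4)%nat).

(* Planar (immersed) grid diagrams, given by the cyclic sequence of    *)
(* their corners V 0, V 1, ..., V (2n-1) (cell indices (a,b)); V (2k)  *)
(* are the markings of the first kind, V (2k+1) of the second kind;    *)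
(* V(2k) -> V(2k+1) is a-parallel, V(2k+1) -> V(2k+2) is b-parallel.   *)

Definition immersed_grid (n : nat) (V : nat -> nat * nat) : Prop :=
  (forall k, V (k + 2 * n)%nat = V k) /\
  (forall k, (fst (V k) < n)%nat /\ (snd (V k) < n)%nat) /\
  (forall k, (k < n)%nat ->
     snd (V (2 * k)%nat) = snd (V (2 * k + 1)%nat) /\
     fst (V (2 * k)%nat) <> fst (V (2 * k + 1)%nat) /\
     fst (V (2 * k + 1)%nat) = fst (V (2 * k + 2)%nat) /\
     snd (V (2 * k + 1)%nat) <> snd (V (2 * k + 2)%nat)) /\
  (forall r, (r < n)%nat ->
     cnt (fun k => Nat.eqb (snd (V (2 * k)%nat)) r) n = 1%nat /\
     cnt (fun k => Nat.eqb (snd (V (2 * k + 1)%nat)) r) n = 1%nat /\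
     cnt (fun k => Nat.eqb (fst (V (2 * k)%nat)) r) n = 1%nat /\
     cnt (fun k => Nat.eqb (fst (V (2 * k + 1)%nat)) r) n = 1%nat).

(* G_wy, (a,b) = (w,y): corners W_j (= proj Z_{j-1}) and X_j (= proj Y_j) *)
Definition Vwy (P : nat -> nat -> nat) (k : nat) : nat * nat :=
  (P (2 * k)%nat 0%nat, P (2 * k)%nat 2%nat).
(* G_zx, (a,b) = (z,x): corners Z_j (= proj Y_j) and W_{j+1} (= proj X_{j+1}) *)
Definition Vzx (P : nat -> nat -> nat) (k : nat) : nat * nat :=
  (P (2 * k + 3)%nat 3%nat, P (2 * k + 3)%nat 1%nat).

Definition va (V : nat -> nat * nat) (k : nat) : R := INR (fst (V k)) + / 2.
Definition vb (V : nat -> nat * nat) (k : nat) : R := INR (snd (V k)) + / 2.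
Definition da (V : nat -> nat * nat) (k : nat) : R := va V (S k) - va V k.
Definition db (V : nat -> nat * nat) (k : nat) : R := vb V (S k) - vb V k.

(* The piecewise-linear immersion gamma : R/2piZ -> R^2 of the grid
   diagram with m = 2n corners: the k-th segment is traversed linearly on
   [2 pi k / m, 2 pi (k+1) / m]. *)
Definition pl_index (m : nat) (th : R) : nat * R :=
  let tau := th * INR m / (2 * PI) in
  let kz := Int_part tau in
  (Z.to_nat (Z.modulo kz (Z.of_nat m)), tau - IZR kz).

Definition pl_a (V : nat -> nat * nat) (m : nat) (th : R) : R :=
  let (k, f) := pl_index m th in va V k + f * da V k.
Definition pl_b (V : nat -> nat * nat) (m : nat) (th : R) : R :=
  let (k, f) := pl_index m th in vb V k + f * db V k.

Definition action (ca cb : R -> R) (t0 t1 : R) : R :=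
  RInt (fun t => cb t * Derive ca t) t0 t1.

Definition lagrangian_conditions (ca cb : R -> R) : Prop :=
  action ca cb 0 (2 * PI) = 0 /\
  (forall t0 t1, 0 <= t0 < 2 * PI -> 0 <= t1 < 2 * PI -> t0 <> t1 ->
     ca t0 = ca t1 -> cb t0 = cb t1 -> action ca cb t0 t1 <> 0).

Definition lagrangian_grid (n : nat) (V : nat -> nat * nat) : Prop :=
  immersed_grid n V /\
  lagrangian_conditions (pl_a V (2 * n)) (pl_b V (2 * n)).

Definition distinct_crossing_actions (n : nat) (V1 V2 : nat -> nat * nat) : Prop :=
  forall t0 t1 u0 u1,
    0 <= t0 < 2 * PI -> 0 <= t1 < 2 * PI -> t0 <> t1 ->
    pl_a V1 (2 * n) t0 = pl_a V1 (2 * n) t1 -> pl_b V1 (2 * n) t0 = pl_b V1 (2 * n) t1 ->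
    0 <= u0 < 2 * PI -> 0 <= u1 < 2 * PI -> u0 <> u1 ->
    pl_a V2 (2 * n) u0 = pl_a V2 (2 * n) u1 -> pl_b V2 (2 * n) u0 = pl_b V2 (2 * n) u1 ->
    Rabs (action (pl_a V1 (2 * n)) (pl_b V1 (2 * n)) t0 t1)
      <> Rabs (action (pl_a V2 (2 * n)) (pl_b V2 (2 * n)) u0 u1).

Definition lagrangian_hypercube (n : nat) (P : nat -> nat -> nat) : Prop :=
  hypercube_marking_conditions n P /\
  lagrangian_grid n (Vzx P) /\ lagrangian_grid n (Vwy P) /\
  distinct_crossing_actions n (Vzx P) (Vwy P).

(* Slight smoothing of the corners of a grid curve with m corners:     *)
(* a smooth 2pi-periodic immersion (ca, cb) which, on successive        *)
(* parameter intervals [s k, t k] and [t k, s (k+1)], turns the corner  *)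
(* V k inside the ball of radius 1/2 around it (tangent in the cone     *)
(* spanned by the incoming and outgoing directions), and then runs      *)
(* straight along the segment [V k, V (k+1)] in its direction.          *)

Definition corner_smoothing (V : nat -> nat * nat) (m : nat) (ca cb : R -> R) : Prop :=
  (forall k x, ex_derive_n ca k x) /\ (forall k x, ex_derive_n cb k x) /\
  (forall t, ca (t + 2 * PI) = ca t /\ cb (t + 2 * PI) = cb t) /\
  (forall t, Derive ca t <> 0 \/ Derive cb t <> 0) /\
  exists s t : nat -> R,
    (forall k, (k < m)%nat -> s k < t k /\ t k < s (S k)) /\
    s m = s 0%nat + 2 * PI /\
    (forall k th, (k < m)%nat -> s k <= th <= t k ->
       (ca th - va V k) ^ 2 + (cb th - vb V k) ^ 2 < (/ 2) ^ 2 /\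
       exists al be, 0 <= al /\ 0 <= be /\
         Derive ca th = al * da V (k + m - 1)%nat + be * da V k /\
         Derive cb th = al * db V (k + m - 1)%nat + be * db V k) /\
    (forall k th, (k < m)%nat -> t k <= th <= s (S k) ->
       exists la mu, 0 < la /\ 0 <= mu <= 1 /\
         Derive ca th = la * da V k /\ Derive cb th = la * db V k /\
         ca th = va V k + mu * da V k /\ cb th = vb V k + mu * db V k).

(* cross product of incoming and outgoing directions at corner k:
   positive iff the curve turns left *)
Definition turn (V : nat -> nat * nat) (m k : nat) : Z :=
  let pa := (Z.of_nat (fst (V k)) - Z.of_nat (fst (V (k + m - 1)%nat)))%Z in
  let pb := (Z.of_nat (snd (V k)) - Z.of_nat (snd (V (k + m - 1)%nat)))%Z in
  let qa := (Z.of_nat (fst (V (S k))) - Z.of_nat (fst (V k)))%Z in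
  let qb := (Z.of_nat (snd (V (S k))) - Z.of_nat (snd (V k)))%Z in
  (pa * qb - pb * qa)%Z.

Definition ccw_corners (V : nat -> nat * nat) (m : nat) : nat :=
  cnt (fun k => Z.ltb 0 (turn V m k)) m.
Definition cw_corners (V : nat -> nat * nat) (m : nat) : nat :=
  cnt (fun k => Z.ltb (turn V m k) 0) m.

Definition grid_winding (V : nat -> nat * nat) (m : nat) : R :=
  (INR (ccw_corners V m) - INR (cw_corners V m)) / 4.

(* Maslov index of a loop of Lagrangian planes in (R^4, dw^dy + dz^dx)  *)

Record R4 := mkR4 { r4w : R; r4x : R; r4y : R; r4z : R }.

Definition cmul (p q : R * R) : R * R :=
  (fst p * fst q - snd p * snd q, fst p * snd q + snd p * fst q).
Definition csub (p q : R * R) : R * R := (fst p - fst q, snd p - snd q).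

(* complex structure compatible with omega: (w,x,y,z) |-> (w + i y, z + i x) *)
Definition cw (v : R4) : R * R := (r4w v, r4y v).
Definition cz (v : R4) : R * R := (r4z v, r4x v).

Definition cdet (e1 e2 : R4) : R * R := csub (cmul (cw e1) (cz e2)) (cmul (cz e1) (cw e2)).

(* Souriau map: for the Lagrangian plane U(R^2) spanned by (e1,e2),
   det(U)^2 = det_C(e1,e2)^2 / |det_C(e1,e2)|^2 *)
Definition souriau (e1 e2 : R4) : R * R :=
  let d := cdet e1 e2 in
  let d2 := cmul d d in
  let N := fst d ^ 2 + snd d ^ 2 in
  (fst d2 / N, snd d2 / N).

Definition souriau_lift (F : R -> R4 * R4) (th : R -> R) : Prop :=
  (forall t, 0 <= t <= 1 -> continuous th t) /\
  (forall t, 0 <= t <= 1 -> souriau (fst (F t)) (snd (F t)) = (cos (th t), sin (th t))).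

Definition maslov_index_is (F : R -> R4 * R4) (mu : R) : Prop :=
  (exists th, souriau_lift F th) /\
  (forall th, souriau_lift F th -> th 1 - th 0 = 2 * PI * mu).

(* tangent frame (d/ds i, d/du i) of i(s,u) = (w(u), x(s), y(u), z(s)),
   where (z(s), x(s)) smooths G_zx and (w(u), y(u)) smooths G_wy *)
Definition torus_frame (z x w y : R -> R) (s u : R) : R4 * R4 :=
  (mkR4 0 (Derive x s) 0 (Derive z s), mkR4 (Derive w u) 0 (Derive y u) 0).

From Stdlib Require Import Reals ZArith Lra Lia List.
From Coquelicot Require Import Coquelicot.
Open Scope R_scope.

(* The Souriau map of the Lagrangian plane spanned by (0, x', 0, z') and
   (w', 0, y', 0) is the square of the product of the unit tangents
   e^(i A_zx) and e^(i A_wy) of the two smoothed grid curves, so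
   2 A_zx(s) + 2 A_wy(u) lifts it and the Maslov index is read off from the
   rotation of the two tangents.  The tangent of a smoothed grid curve is
   constant along the straight pieces and turns by exactly PI/2 or -PI/2
   inside each corner ball (it stays in the cone between the orthogonal
   incoming and outgoing directions), with the sign of the corner; over one
   period it therefore rotates by (PI/2)(#ccw - #cw) = 2 PI w(G). *)

Lemma IVT_on (h : R -> R) a b v : a < b -> (forall x, a <= x <= b -> continuous h x) ->
  h a < v < h b \/ h b < v < h a -> exists c, a <= c <= b /\ h c = v.
Proof.
  intros Hab Hc Hv.
  assert (Hcpt : forall g : R -> R, (forall x, a <= x <= b -> continuous g x) ->
    forall x, a <= x <= b -> continuity_pt g x).
  { intros g Hg x Hx. apply continuity_pt_filterlim, Hg, Hx. }
  destruct Hv as [Hv|Hv].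
  - destruct (Ranalysis5.IVT_interv (fun x => h x - v) a b) as [c [Hc1 Hc2]]; try lra.
    + apply Hcpt. intros x Hx. apply (continuous_minus h (fun _ => v)), continuous_const; auto.
    + exists c. split; auto. lra.
  - destruct (Ranalysis5.IVT_interv (fun x => v - h x) a b) as [c [Hc1 Hc2]]; try lra.
    + apply Hcpt. intros x Hx. apply (continuous_minus (fun _ => v) h); auto.
      apply continuous_const.
    + exists c. split; auto. lra.
Qed.

(* Between two consecutive zeros of [sin] lies a value [PI/2] or [-PI/2] where [sin] is not zero. *)
Lemma sin_zero_anchored (h : R -> R) a b : (forall x, a <= x <= b -> continuous h x) ->
  h a = 0 -> (forall x, a <= x <= b -> sin (h x) = 0) -> forall x, a <= x <= b -> h x = 0.
Proof.
  intros Hc H0 Hs x Hx.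
  pose proof PI_RGT_0.
  assert (Hc' : forall y, a <= y <= x -> continuous h y) by (intros; apply Hc; lra).
  destruct (Rtotal_order (h x) 0) as [Hneg|[Hzero|Hpos]]; auto; exfalso;
    (assert (Hax : a < x) by (destruct (Req_dec a x); [subst; lra | lra])).
  - destruct (Rlt_or_le (- PI) (h x)) as [Hgt|Hle].
    + pose proof (sin_lt_0_var (h x) Hgt Hneg). rewrite Hs in *; lra.
    + destruct (IVT_on h a x (- (PI / 2)) Hax Hc') as [c [Hcx Hhc]]; [lra|].
      pose proof (Hs c ltac:(lra)) as E. rewrite Hhc, sin_neg, sin_PI2 in E. lra.
  - destruct (Rlt_or_le (h x) PI) as [Hlt|Hge].
    + pose proof (sin_gt_0 (h x) Hpos Hlt). rewrite Hs in *; lra.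
    + destruct (IVT_on h a x (PI / 2) Hax Hc') as [c [Hcx Hhc]]; [lra|].
      pose proof (Hs c ltac:(lra)) as E. rewrite Hhc, sin_PI2 in E. lra.
Qed.

Lemma sin_zero_const_on (h : R -> R) a b : (forall x, a <= x <= b -> continuous h x) ->
  (forall x, a <= x <= b -> sin (h x) = 0) ->
  forall x y, a <= x <= b -> a <= y <= b -> h x = h y.
Proof.
  intros Hc Hs.
  assert (Hab : forall x, a <= x <= b -> h x = h a).
  2: { intros x y Hx Hy. rewrite (Hab x Hx), (Hab y Hy). auto. }
  intros x Hx.
  enough (E : h x - h a = 0) by lra.
  apply (sin_zero_anchored (fun y => h y - h a) a b); try lra; auto.
  - intros y Hy. apply (continuous_minus h (fun _ => h a)); [auto | apply continuous_const].
  - intros y Hy. rewrite sin_minus, (Hs y Hy), (Hs a ltac:(lra)). ring.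
Qed.

Lemma sin_zero_const (h : R -> R) : (forall x, continuous h x) ->
  (forall x, sin (h x) = 0) -> forall x y, h x = h y.
Proof.
  intros Hc Hs x y.
  apply (sin_zero_const_on h (Rmin x y) (Rmax x y)); auto;
    split; auto using Rmin_l, Rmin_r, Rmax_l, Rmax_r.
Qed.

Lemma quarter_turn (h : R -> R) a b : (forall x, continuous h x) -> h a = 0 -> a <= b ->
  (forall x, a <= x <= b -> 0 <= cos (h x) /\ 0 <= sin (h x)) ->
  cos (h b) = 0 -> h b = PI / 2.
Proof.
  intros Hc H0 Hab Hcs Hcb.
  pose proof PI_RGT_0.
  assert (Hc' : forall x, a <= x <= b -> continuous h x) by auto.
  assert (Hlt : a < b) by (destruct Hab; auto; subst; rewrite H0, cos_0 in Hcb; lra).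
  destruct (Rlt_or_le (PI / 2) (h b)) as [Hgt|Hle].
  - exfalso. destruct (Rlt_or_le (h b) (3 * (PI / 2))).
    + pose proof (cos_lt_0 _ Hgt H1). lra.
    + destruct (IVT_on h a b PI Hlt Hc') as [c [Hcb' Hhc]]; [lra|].
      destruct (Hcs c Hcb') as [E _]. rewrite Hhc, cos_PI in E. lra.
  - destruct (Rlt_or_le (h b) 0) as [Hneg|Hnn].
    + exfalso. destruct (Rlt_or_le (- PI) (h b)).
      * pose proof (sin_lt_0_var _ H1 Hneg). destruct (Hcs b ltac:(lra)). lra.
      * destruct (IVT_on h a b (- (PI / 2)) Hlt Hc') as [c [Hcb' Hhc]]; [lra|].
        destruct (Hcs c Hcb') as [_ E]. rewrite Hhc, sin_neg, sin_PI2 in E. lra.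
    + destruct Hle as [Hle|]; auto. exfalso.
      pose proof (cos_gt_0 (h b) ltac:(lra) Hle). lra.
Qed.

Lemma signed_quarter_turn (h : R -> R) (sg : R) a b : sg = 1 \/ sg = -1 ->
  (forall x, continuous h x) -> h a = 0 -> a <= b ->
  (forall x, a <= x <= b -> 0 <= cos (h x) /\ 0 <= sg * sin (h x)) ->
  cos (h b) = 0 -> h b = sg * (PI / 2).
Proof.
  intros Hsg Hc H0 Hab Hcs Hcb.
  assert (Hrot : forall x, cos (sg * h x) = cos (h x) /\ sin (sg * h x) = sg * sin (h x)).
  { intro x. destruct Hsg; subst sg.
    - rewrite !Rmult_1_l. auto.
    - replace (-1 * h x) with (- h x) by ring. rewrite cos_neg, sin_neg. split; ring. }
  enough (E : sg * h b = PI / 2) by (destruct Hsg; subst sg; lra).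
  apply (quarter_turn (fun x => sg * h x) a b); auto.
  - intro x. apply (continuous_mult (fun _ => sg) h); [apply continuous_const | auto].
  - rewrite H0. ring.
  - intros x Hx. rewrite (proj1 (Hrot x)), (proj2 (Hrot x)). auto.
  - rewrite (proj1 (Hrot b)). auto.
Qed.

Lemma continuous_pos_of_nonzero (f : R -> R) : (forall t, continuous f t) ->
  (forall t, f t <> 0) -> 0 < f 0 -> forall t, 0 < f t.
Proof.
  intros Hc Hn H0 t.
  destruct (Rlt_or_le 0 (f t)) as [Hpos|Hle]; auto. exfalso.
  assert (Hneg : f t < 0) by (destruct Hle; auto; exfalso; apply (Hn t); auto).
  destruct (Rtotal_order 0 t) as [Hlt|[Heq|Hgt]].
  - destruct (IVT_on f 0 t 0 Hlt (fun x _ => Hc x)) as [c [_ Hc0]]; [lra|].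
    exact (Hn c Hc0).
  - subst. lra.
  - destruct (IVT_on f t 0 0 Hgt (fun x _ => Hc x)) as [c [_ Hc0]]; [lra|].
    exact (Hn c Hc0).
Qed.

Lemma const_of_derive_zero (f : R -> R) : (forall t, is_derive f t 0) -> forall t, f t = f 0.
Proof.
  intros H t.
  destruct (Rtotal_order 0 t) as [Hlt|[Heq|Hgt]].
  - symmetry. apply (eq_is_derive f 0 t); auto.
  - subst; auto.
  - apply (eq_is_derive f t 0); auto.
Qed.

Lemma antiderivative_exists (h : R -> R) (c : R) : (forall t, continuous h t) ->
  exists H : R -> R, H 0 = c /\ forall t, is_derive H t (h t).
Proof.
  intros Hc. exists (fun t => c + RInt h 0 t). split.
  - rewrite RInt_point. unfold zero; simpl. ring.
  - intro t.
    assert (HI : is_derive (RInt h 0) t (h t)).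
    { apply (is_derive_RInt h (RInt h 0) 0 t); auto.
      apply filter_forall. intro b. apply (RInt_correct h 0 b).
      apply (ex_RInt_continuous h). auto. }
    pose proof (is_derive_plus (fun _ => c) (RInt h 0) t 0 (h t) (is_derive_const c t) HI) as E.
    unfold plus, zero in E; simpl in E. rewrite Rplus_0_l in E. exact E.
Qed.

Lemma unit_vector_angle p q : p ^ 2 + q ^ 2 = 1 -> exists a, cos a = p /\ sin a = q.
Proof.
  intro Hpq.
  assert (Hp : -1 <= p <= 1) by (split; nra).
  destruct (Rle_dec 0 q) as [Hq|Hq].
  - exists (acos p). rewrite cos_acos, sin_acos by auto. split; auto.
    replace (1 - p²) with (q ^ 2) by (unfold Rsqr; lra). apply sqrt_pow2; auto.
  - exists (- acos p). rewrite cos_neg, sin_neg, cos_acos, sin_acos by auto. split; auto.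
    replace (1 - p²) with ((- q) ^ 2) by (unfold Rsqr; lra). rewrite sqrt_pow2; lra.
Qed.

Definition vnorm (F G : R -> R) (t : R) : R := sqrt (F t ^ 2 + G t ^ 2).

Definition polar_angle (F G A : R -> R) : Prop :=
  forall t, F t = vnorm F G t * cos (A t) /\ G t = vnorm F G t * sin (A t).

Lemma sqr_sum_pos (p q : R) : p <> 0 \/ q <> 0 -> 0 < p ^ 2 + q ^ 2.
Proof. intros [H|H]; pose proof (pow2_ge_0 p); pose proof (pow2_ge_0 q); nra. Qed.

Lemma vnorm_pos F G t : F t <> 0 \/ G t <> 0 -> 0 < vnorm F G t.
Proof. intro H. apply sqrt_lt_R0, sqr_sum_pos, H. Qed.

Lemma vnorm_sqr F G t : vnorm F G t * vnorm F G t = F t ^ 2 + G t ^ 2.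
Proof. apply sqrt_sqrt. pose proof (pow2_ge_0 (F t)); pose proof (pow2_ge_0 (G t)); lra. Qed.

Lemma polar_angle_diff F G A x y : polar_angle F G A ->
  F x <> 0 \/ G x <> 0 -> F y <> 0 \/ G y <> 0 ->
  cos (A x - A y) = (F x * F y + G x * G y) / (vnorm F G x * vnorm F G y) /\
  sin (A x - A y) = (G x * F y - F x * G y) / (vnorm F G x * vnorm F G y).
Proof.
  intros HA Hx Hy.
  pose proof (vnorm_pos F G x Hx). pose proof (vnorm_pos F G y Hy).
  destruct (HA x) as [-> ->]. destruct (HA y) as [-> ->].
  rewrite cos_minus, sin_minus. split; field; lra.
Qed.

Definition angular_velocity (F G : R -> R) (t : R) : R :=
  (F t * Derive G t - G t * Derive F t) / (F t ^ 2 + G t ^ 2).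

Section PolarAngle.

Variables F G : R -> R.
Hypothesis HF : forall t, ex_derive F t.
Hypothesis HG : forall t, ex_derive G t.
Hypothesis HF' : forall t, ex_derive (Derive F) t.
Hypothesis HG' : forall t, ex_derive (Derive G) t.
Hypothesis Hreg : forall t, F t <> 0 \/ G t <> 0.

Let HN t : F t * F t + G t * G t <> 0.
Proof. pose proof (sqr_sum_pos _ _ (Hreg t)). nra. Qed.

Lemma angular_velocity_continuous t : continuous (angular_velocity F G) t.
Proof.
  apply (ex_derive_continuous (angular_velocity F G)). unfold angular_velocity.
  auto_derive. repeat split; auto.
  replace (F t * (F t * 1) + G t * (G t * 1)) with (F t * F t + G t * G t) by ring. auto.
Qed.

(* [(G cos A - F sin A)^2 / (F^2 + G^2)] has zero derivative and vanishes at 0. *)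
Lemma angular_velocity_normal_zero (A : R -> R) :
  (forall t, is_derive A t (angular_velocity F G t)) ->
  G 0 * cos (A 0) - F 0 * sin (A 0) = 0 ->
  forall t, G t * cos (A t) - F t * sin (A t) = 0.
Proof.
  intros HA H0.
  assert (HAe : forall t, ex_derive A t) by (intro t; eexists; apply HA).
  assert (HAD : forall t, Derive A t = angular_velocity F G t)
    by (intro; apply is_derive_unique, HA).
  assert (Hd : forall t, is_derive
    (fun t => (G t * cos (A t) - F t * sin (A t)) ^ 2 / (F t ^ 2 + G t ^ 2)) t 0).
  { intro t. auto_derive.
    - repeat split; auto.
      replace (F t * (F t * 1) + G t * (G t * 1)) with (F t * F t + G t * G t) by ring. auto.
    - change (Derive (fun x => A x) t) with (Derive A t).
      change (Derive (fun x => F x) t) with (Derive F t).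
      change (Derive (fun x => G x) t) with (Derive G t).
      rewrite HAD. unfold angular_velocity. field. auto. }
  intro t. pose proof (const_of_derive_zero _ Hd t) as E. cbv beta in E. rewrite H0 in E.
  pose proof (sqr_sum_pos _ _ (Hreg t)).
  assert (E2 : (G t * cos (A t) - F t * sin (A t)) ^ 2 = 0).
  { apply (Rmult_eq_reg_r (/ (F t ^ 2 + G t ^ 2))).
    - unfold Rdiv in E. rewrite E. ring.
    - apply Rgt_not_eq, Rinv_0_lt_compat. auto. }
  nra.
Qed.

Lemma polar_angle_of_angular_velocity (A : R -> R) :
  (forall t, is_derive A t (angular_velocity F G t)) ->
  F 0 = vnorm F G 0 * cos (A 0) -> G 0 = vnorm F G 0 * sin (A 0) -> polar_angle F G A.
Proof.
  intros HA HF0 HG0.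
  assert (HAe : forall t, ex_derive A t) by (intro t; eexists; apply HA).
  pose proof (vnorm_pos F G 0 (Hreg 0)) as Hr0.
  pose proof (angular_velocity_normal_zero A HA ltac:(rewrite HF0, HG0; ring)) as Hcross.
  set (Q := fun t => F t * cos (A t) + G t * sin (A t)).
  assert (HQsq : forall t, Q t ^ 2 = F t ^ 2 + G t ^ 2).
  { intro t. unfold Q. pose proof (sin2_cos2 (A t)) as S. unfold Rsqr in S.
    pose proof (Hcross t). nra. }
  assert (HQpos : forall t, 0 < Q t).
  { apply continuous_pos_of_nonzero.
    - intro t. apply (ex_derive_continuous Q). unfold Q. auto_derive. repeat split; auto.
    - intros t E. pose proof (HQsq t) as S. rewrite E in S. pose proof (HN t). simpl in S. nra.
    - unfold Q. rewrite HF0, HG0. pose proof (sin2_cos2 (A 0)) as S. unfold Rsqr in S. nra. }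
  assert (HQ : forall t, Q t = vnorm F G t).
  { intro t. unfold vnorm. rewrite <- HQsq. symmetry. apply sqrt_pow2. left; auto. }
  intro t. rewrite <- HQ. unfold Q.
  pose proof (sin2_cos2 (A t)) as S. unfold Rsqr in S. pose proof (Hcross t) as C.
  split; apply Rminus_diag_uniq_sym.
  - transitivity (sin (A t) * (G t * cos (A t) - F t * sin (A t))
                  + F t * (sin (A t) * sin (A t) + cos (A t) * cos (A t) - 1)); [ring|].
    rewrite C, S. ring.
  - transitivity (- cos (A t) * (G t * cos (A t) - F t * sin (A t))
                  + G t * (sin (A t) * sin (A t) + cos (A t) * cos (A t) - 1)); [ring|].
    rewrite C, S. ring.
Qed.

Lemma polar_angle_exists : exists A : R -> R, (forall t, continuous A t) /\ polar_angle F G A.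
Proof.
  pose proof (vnorm_pos F G 0 (Hreg 0)) as Hr0.
  destruct (unit_vector_angle (F 0 / vnorm F G 0) (G 0 / vnorm F G 0)) as [a0 [Hc Hs]].
  { replace ((F 0 / vnorm F G 0) ^ 2 + (G 0 / vnorm F G 0) ^ 2)
      with ((F 0 ^ 2 + G 0 ^ 2) / (vnorm F G 0 * vnorm F G 0)) by (field; lra).
    rewrite <- vnorm_sqr. field. lra. }
  destruct (antiderivative_exists (angular_velocity F G) a0 angular_velocity_continuous)
    as [A [HA0 HA]].
  exists A. split.
  - intro t. apply (ex_derive_continuous A). eexists; apply HA.
  - apply polar_angle_of_angular_velocity; auto; rewrite HA0, ?Hc, ?Hs; field; lra.
Qed.

End PolarAngle.

Lemma Derive_periodic (f : R -> R) c : (forall x, ex_derive f x) ->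
  (forall t, f (t + c) = f t) -> forall x, Derive f (x + c) = Derive f x.
Proof.
  intros Hd Hp x.
  rewrite <- (Derive_ext (fun t => f (t + c)) f x) by auto.
  symmetry. apply is_derive_unique. auto_derive; auto.
  change (Derive (fun x => f x) (x + c)) with (Derive f (x + c)). ring.
Qed.

Lemma cnt_S (p : nat -> bool) j : cnt p (S j) = (cnt p j + if p j then 1 else 0)%nat.
Proof.
  unfold cnt. rewrite seq_S, filter_app, length_app. simpl. destruct (p j); simpl; lia.
Qed.

Lemma telescope_quarter_turns (X : nat -> R) (f : nat -> Z) (N : nat) :
  (forall k, (k < N)%nat -> f k <> 0%Z) ->
  (forall k, (k < N)%nat -> X (S k) - X k = IZR (Z.sgn (f k)) * (PI / 2)) ->
  X N - X 0%nat = PI / 2 * (INR (cnt (fun k => Z.ltb 0 (f k)) N)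
                            - INR (cnt (fun k => Z.ltb (f k) 0) N)).
Proof.
  intros Hnz HX. induction N as [|N IH].
  - unfold cnt. simpl. ring.
  - replace (X (S N) - X 0%nat) with ((X (S N) - X N) + (X N - X 0%nat)) by ring.
    rewrite IH by (intros; auto).
    rewrite !cnt_S, !plus_INR, HX by lia.
    specialize (Hnz N (Nat.lt_succ_diag_r N)).
    destruct (Z.ltb_spec 0 (f N)); destruct (Z.ltb_spec (f N) 0); try lia.
    + rewrite Z.sgn_pos by lia. simpl. lra.
    + rewrite Z.sgn_neg by lia. simpl. lra.
Qed.

Lemma IZR_sgn_facts (z : Z) : z <> 0%Z ->
  (IZR (Z.sgn z) = 1 \/ IZR (Z.sgn z) = -1) /\ 0 <= IZR (Z.sgn z) * IZR z.
Proof.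
  intro Hz. rewrite <- mult_IZR.
  destruct (Z.lt_total z 0) as [Hl|[He|Hg]]; [| contradiction |].
  - rewrite Z.sgn_neg by auto. split; [auto | apply IZR_le; lia].
  - rewrite Z.sgn_pos by auto. split; [auto | apply IZR_le; lia].
Qed.

Lemma da_eq0 (V : nat -> nat * nat) k : da V k = 0 <-> fst (V (S k)) = fst (V k).
Proof.
  unfold da, va. split; intro E; [apply INR_eq; lra | rewrite E; ring].
Qed.

Lemma db_eq0 (V : nat -> nat * nat) k : db V k = 0 <-> snd (V (S k)) = snd (V k).
Proof.
  unfold db, vb. split; intro E; [apply INR_eq; lra | rewrite E; ring].
Qed.

Section GridDiagram.

Variables (n : nat) (V : nat -> nat * nat).
Hypothesis HG : immersed_grid n V.

Let Hper : forall k, V (k + 2 * n)%nat = V k := proj1 HG.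

Lemma grid_periodic q k : V (k + q * (2 * n))%nat = V k.
Proof.
  induction q as [|q IH].
  - f_equal. lia.
  - replace (k + S q * (2 * n))%nat with ((k + q * (2 * n)) + 2 * n)%nat by lia.
    rewrite Hper. auto.
Qed.

Lemma grid_d_periodic k : da V (k + 2 * n) = da V k /\ db V (k + 2 * n) = db V k.
Proof.
  unfold da, db, va, vb.
  replace (S (k + 2 * n)) with (S k + 2 * n)%nat by lia. rewrite !Hper. split; auto.
Qed.

Hypothesis Hn : (1 <= n)%nat.

Lemma turn_cross k : IZR (turn V (2 * n) k)
  = da V (k + 2 * n - 1) * db V k - db V (k + 2 * n - 1) * da V k.
Proof.
  unfold turn, da, db, va, vb. cbv zeta.
  replace (S (k + 2 * n - 1)) with (k + 2 * n)%nat by lia. rewrite Hper.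
  rewrite minus_IZR, !mult_IZR, !minus_IZR, <- !INR_IZR_INZ. ring.
Qed.

Lemma grid_segments j :
  (db V (2 * j) = 0 /\ da V (2 * j) <> 0) /\ (da V (2 * j + 1) = 0 /\ db V (2 * j + 1) <> 0).
Proof.
  pose proof HG as (_ & _ & Hs & _).
  set (q := (j / n)%nat). set (j' := (j mod n)%nat).
  assert (Hj' : (j' < n)%nat) by (apply Nat.mod_upper_bound; lia).
  assert (Hj : j = (j' + q * n)%nat) by (unfold q, j'; pose proof (Nat.div_mod j n); lia).
  assert (Hshift : forall i, (i <= 2)%nat -> V (2 * j + i)%nat = V (2 * j' + i)%nat).
  { intros i Hi. rewrite <- (grid_periodic q (2 * j' + i)). f_equal. lia. }
  destruct (Hs j' Hj') as (E1 & N1 & E2 & N2).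
  rewrite !da_eq0, !db_eq0.
  replace (S (2 * j)) with (2 * j + 1)%nat by lia.
  replace (S (2 * j + 1)) with (2 * j + 2)%nat by lia.
  pose proof (Hshift 0%nat) as H0. rewrite !Nat.add_0_r in H0.
  rewrite H0, (Hshift 1%nat), (Hshift 2%nat) by lia. auto.
Qed.

Lemma grid_corner k :
  da V (k + 2 * n - 1) * da V k + db V (k + 2 * n - 1) * db V k = 0 /\
  turn V (2 * n) k <> 0%Z.
Proof.
  assert (Hnz : forall p q : R, p <> 0 -> q <> 0 -> p * q <> 0)
    by (intros p q Hp Hq; apply Rmult_integral_contrapositive; auto).
  assert (Hturn : turn V (2 * n) k <> 0%Z <->
    da V (k + 2 * n - 1) * db V k - db V (k + 2 * n - 1) * da V k <> 0)
    by (rewrite <- turn_cross; split; intros H E; apply H;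
        [apply eq_IZR; auto | rewrite E; auto]).
  rewrite Hturn.
  destruct (Nat.Even_or_Odd k) as [[j Hj]|[j Hj]]; subst k.
  - replace (2 * j + 2 * n - 1)%nat with (2 * (j + n - 1) + 1)%nat by lia.
    destruct (grid_segments j) as [[B1 B2] _].
    destruct (grid_segments (j + n - 1)) as [_ [C1 C2]].
    rewrite B1, C1. split; [ring|]. specialize (Hnz _ _ C2 B2). lra.
  - replace (2 * j + 1 + 2 * n - 1)%nat with (2 * (j + n))%nat by lia.
    destruct (grid_segments j) as [_ [B1 B2]].
    destruct (grid_segments (j + n)) as [[C1 C2] _].
    rewrite B1, C1. split; [ring|]. specialize (Hnz _ _ C2 B2). lra.
Qed.

End GridDiagram.

Section SmoothedGridRotation.

Variables (n : nat) (V : nat -> nat * nat) (ca cb A : R -> R) (s t : nat -> R).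
Hypothesis Hn : (1 <= n)%nat.
Hypothesis HG : immersed_grid n V.
Hypothesis Hca : forall th, ex_derive ca th.
Hypothesis Hcb : forall th, ex_derive cb th.
Hypothesis Hper : forall th, ca (th + 2 * PI) = ca th /\ cb (th + 2 * PI) = cb th.
Hypothesis Hreg : forall th, Derive ca th <> 0 \/ Derive cb th <> 0.
Hypothesis Hst : forall k, (k < 2 * n)%nat -> s k < t k /\ t k < s (S k).
Hypothesis Hsm : s (2 * n)%nat = s 0%nat + 2 * PI.
Hypothesis Hcor : forall k th, (k < 2 * n)%nat -> s k <= th <= t k ->
  exists al be, 0 <= al /\ 0 <= be /\
    Derive ca th = al * da V (k + 2 * n - 1)%nat + be * da V k /\
    Derive cb th = al * db V (k + 2 * n - 1)%nat + be * db V k.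
Hypothesis Hstr : forall k th, (k < 2 * n)%nat -> t k <= th <= s (S k) ->
  exists la, 0 < la /\ Derive ca th = la * da V k /\ Derive cb th = la * db V k.
Hypothesis HAc : forall th, continuous A th.
Hypothesis HA : polar_angle (Derive ca) (Derive cb) A.

Let Hdiff x y := polar_angle_diff (Derive ca) (Derive cb) A x y HA (Hreg x) (Hreg y).
Let Hr x := vnorm_pos (Derive ca) (Derive cb) x (Hreg x).

Let HAsub c : forall th, continuous (fun x => A x - c) th.
Proof. intro th. apply (continuous_minus A (fun _ => c)); [auto | apply continuous_const]. Qed.

Lemma angle_const_on_segment k th : (k < 2 * n)%nat -> t k <= th <= s (S k) -> A th = A (t k).
Proof.
  intros Hk Hth. destruct (Hst k Hk).
  enough (E : A th - A (t k) = A (t k) - A (t k)) by lra.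
  apply (sin_zero_const_on (fun x => A x - A (t k)) (t k) (s (S k))); auto; try lra.
  intros x Hx.
  destruct (Hstr k x Hk Hx) as (la & Hla & E1 & E2).
  destruct (Hstr k (t k) Hk ltac:(lra)) as (la0 & Hla0 & E3 & E4).
  rewrite (proj2 (Hdiff x (t k))), E1, E2, E3, E4. unfold Rdiv.
  replace (la * db V k * (la0 * da V k) - la * da V k * (la0 * db V k)) with 0 by ring. ring.
Qed.

Lemma initial_direction k : (k < 2 * n)%nat -> exists la, 0 < la /\
  Derive ca (s k) = la * da V (k + 2 * n - 1) /\ Derive cb (s k) = la * db V (k + 2 * n - 1).
Proof.
  intros Hk. destruct k as [|k].
  - assert (Hk' : (2 * n - 1 < 2 * n)%nat) by lia.
    destruct (Hst _ Hk') as [_ Hts].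
    replace (S (2 * n - 1)) with (2 * n)%nat in Hts by lia.
    assert (Hx : t (2 * n - 1)%nat <= s (2 * n)%nat <= s (S (2 * n - 1)))
      by (replace (S (2 * n - 1)) with (2 * n)%nat by lia; lra).
    destruct (Hstr _ _ Hk' Hx) as (la & Hla & E1 & E2).
    exists la. rewrite Hsm in E1, E2. simpl.
    rewrite <- (Derive_periodic ca (2 * PI)), <- (Derive_periodic cb (2 * PI));
      auto; intro; apply Hper.
  - assert (Hk' : (k < 2 * n)%nat) by lia.
    destruct (Hst _ Hk') as [_ Hts].
    destruct (Hstr k (s (S k)) Hk' ltac:(lra)) as (la & Hla & E1 & E2).
    exists la. replace (S k + 2 * n - 1)%nat with (k + 2 * n)%nat by lia.
    destruct (grid_d_periodic n V HG k) as [-> ->]. auto.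
Qed.

(* Inside the corner ball the tangent lies in the cone spanned by the incoming
   and outgoing directions, which are orthogonal: it turns by exactly a quarter. *)
Lemma angle_turn_at_corner k : (k < 2 * n)%nat ->
  A (t k) - A (s k) = IZR (Z.sgn (turn V (2 * n) k)) * (PI / 2).
Proof.
  intros Hk.
  destruct (initial_direction k Hk) as (la0 & Hla0 & E1 & E2).
  destruct (grid_corner n V HG Hn k) as [Hdot Hnz].
  pose proof (turn_cross n V HG Hn k) as Hcross.
  destruct (Hst k Hk) as [Hskt Htks].
  set (di1 := da V (k + 2 * n - 1)) in *. set (di2 := db V (k + 2 * n - 1)) in *.
  set (sg := IZR (Z.sgn (turn V (2 * n) k))).
  destruct (IZR_sgn_facts _ Hnz) as [Hsg Hsgt]. fold sg in Hsg, Hsgt.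
  assert (Hrr : forall x, 0 < vnorm (Derive ca) (Derive cb) x * vnorm (Derive ca) (Derive cb) (s k))
    by (intro; apply Rmult_lt_0_compat; auto).
  apply (signed_quarter_turn (fun x => A x - A (s k)) sg (s k) (t k)); auto; try lra.
  - intros x Hx. destruct (Hcor k x Hk Hx) as (al & be & Hal & Hbe & D1 & D2).
    rewrite (proj1 (Hdiff x (s k))), (proj2 (Hdiff x (s k))), E1, E2, D1, D2.
    fold di1 di2. split.
    + apply Rdiv_le_0_compat; auto.
      replace ((al * di1 + be * da V k) * (la0 * di1) + (al * di2 + be * db V k) * (la0 * di2))
        with (la0 * (al * (di1 * di1 + di2 * di2) + be * (di1 * da V k + di2 * db V k)))
        by ring.
      rewrite Hdot, Rmult_0_r, Rplus_0_r.
      apply Rmult_le_pos; [lra | apply Rmult_le_pos; nra].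
    + unfold Rdiv. rewrite <- Rmult_assoc.
      apply Rmult_le_pos; [|left; apply Rinv_0_lt_compat; auto].
      replace (sg * ((al * di2 + be * db V k) * (la0 * di1)
                     - (al * di1 + be * da V k) * (la0 * di2)))
        with (la0 * be * (sg * IZR (turn V (2 * n) k))) by (rewrite Hcross; ring).
      apply Rmult_le_pos; [apply Rmult_le_pos|]; lra.
  - destruct (Hstr k (t k) Hk ltac:(lra)) as (la & Hla & D1 & D2).
    rewrite (proj1 (Hdiff (t k) (s k))), E1, E2, D1, D2.
    replace (la * da V k * (la0 * di1) + la * db V k * (la0 * di2))
      with (la * la0 * (di1 * da V k + di2 * db V k)) by ring.
    rewrite Hdot. unfold Rdiv. ring.
Qed.

Lemma angle_at_corner_starts :
  A (s (2 * n)%nat) - A (s 0%nat) = 2 * PI * grid_winding V (2 * n).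
Proof.
  unfold grid_winding, ccw_corners, cw_corners.
  rewrite (telescope_quarter_turns (fun j => A (s j)) (turn V (2 * n)) (2 * n)).
  - field.
  - intros k _. apply (grid_corner n V HG Hn k).
  - intros k Hk. destruct (Hst k Hk).
    rewrite (angle_const_on_segment k (s (S k))), <- angle_turn_at_corner by (auto; lra).
    ring.
Qed.

Lemma angle_period_shift sg : A (sg + 2 * PI) = A sg + 2 * PI * grid_winding V (2 * n).
Proof.
  assert (HD : forall x,
    Derive ca (x + 2 * PI) = Derive ca x /\ Derive cb (x + 2 * PI) = Derive cb x)
    by (intro; split; apply Derive_periodic; auto; intro; apply Hper).
  assert (Hconst : forall x y, A (x + 2 * PI) - A x = A (y + 2 * PI) - A y).
  { apply (sin_zero_const (fun x => A (x + 2 * PI) - A x)).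
    - intro x. apply (continuous_minus (fun x => A (x + 2 * PI)) A); auto.
      apply (continuous_comp (fun x => x + 2 * PI) A); auto.
      apply (continuous_plus (fun x => x) (fun _ => 2 * PI));
        [apply continuous_id | apply continuous_const].
    - intro x. rewrite (proj2 (Hdiff (x + 2 * PI) x)), !(proj1 (HD x)), !(proj2 (HD x)).
      unfold Rdiv. ring. }
  pose proof (Hconst sg (s 0%nat)) as E. rewrite <- Hsm, angle_at_corner_starts in E. lra.
Qed.

End SmoothedGridRotation.

Lemma smoothing_angle_exists V m ca cb : corner_smoothing V m ca cb ->
  exists A : R -> R, (forall th, continuous A th) /\ polar_angle (Derive ca) (Derive cb) A.
Proof.
  intros (Ha & Hb & _ & Hreg & _).
  apply polar_angle_exists; auto; intro th; [exact (Ha 2%nat th) | exact (Hb 2%nat th)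
    | exact (Ha 3%nat th) | exact (Hb 3%nat th)].
Qed.

Lemma smoothing_angle_period n V ca cb A :
  immersed_grid n V -> corner_smoothing V (2 * n) ca cb ->
  (forall th, continuous A th) -> polar_angle (Derive ca) (Derive cb) A ->
  forall sg, A (sg + 2 * PI) = A sg + 2 * PI * grid_winding V (2 * n).
Proof.
  intros HG (Ha & Hb & Hper & Hreg & s & t & Hst & Hsm & Hcor & Hstr) HAc HA.
  assert (Hn : (1 <= n)%nat) by (destruct n; [simpl in Hsm; pose proof PI_RGT_0; lra | lia]).
  apply (angle_period_shift n V ca cb A s t); auto.
  - intro th. exact (Ha 1%nat th).
  - intro th. exact (Hb 1%nat th).
  - intros k th Hk Hth. apply (Hcor k th Hk Hth).
  - intros k th Hk Hth. destruct (Hstr k th Hk Hth) as (la & mu & Hla & _ & E1 & E2 & _).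
    exists la. auto.
Qed.

Lemma periodic_shift_multiple (A : R -> R) c w : (forall x, A (x + c) = A x + c * w) ->
  forall (a : Z) x, A (x + c * IZR a) = A x + c * IZR a * w.
Proof.
  intros H a. induction a using Z.peano_ind; intro x.
  - rewrite Rmult_0_r, Rplus_0_r. ring.
  - rewrite succ_IZR.
    replace (x + c * (IZR a + 1)) with ((x + c * IZR a) + c) by ring.
    rewrite H, IHa. ring.
  - rewrite <- Z.sub_1_r, minus_IZR.
    pose proof (H (x + c * (IZR a - 1))) as E.
    replace (x + c * (IZR a - 1) + c) with (x + c * IZR a) in E by ring.
    rewrite IHa in E. lra.
Qed.

Lemma souriau_polar r1 r2 a b : 0 < r1 -> 0 < r2 ->
  souriau (mkR4 0 (r1 * sin a) 0 (r1 * cos a)) (mkR4 (r2 * cos b) 0 (r2 * sin b) 0)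
  = (cos (2 * a + 2 * b), sin (2 * a + 2 * b)).
Proof.
  intros H1 H2.
  assert (Hsc : forall x, sin x ^ 2 + cos x ^ 2 = 1)
    by (intro x; pose proof (sin2_cos2 x); unfold Rsqr in *; lra).
  unfold souriau, cdet, cw, cz, cmul, csub. simpl.
  replace (2 * a + 2 * b) with (2 * (a + b)) by ring.
  rewrite cos_2a, sin_2a, cos_plus, sin_plus.
  match goal with |- (?X / ?Y, ?Z / ?Y) = _ =>
    replace Y with ((r1 * r2) ^ 2 * ((sin a ^ 2 + cos a ^ 2) * (sin b ^ 2 + cos b ^ 2)))
      by ring end.
  rewrite !Hsc.
  f_equal; field; lra.
Qed.

(* Lifts of the same loop in the circle differ by a constant. *)
Lemma maslov_index_of_lift (F : R -> R4 * R4) (th : R -> R) (mu : R) :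
  souriau_lift F th -> th 1 - th 0 = 2 * PI * mu -> maslov_index_is F mu.
Proof.
  intros [Hc Heq] Hmu. split; [exists th; split; auto|].
  intros th' [Hc' Heq'].
  assert (Hconst : th' 1 - th 1 = th' 0 - th 0).
  { apply (sin_zero_const_on (fun t => th' t - th t) 0 1); try lra.
    - intros t Ht. apply (continuous_minus th' th); auto.
    - intros t Ht. rewrite sin_minus.
      pose proof (Heq t Ht) as E. rewrite Heq' in E by auto. injection E as -> ->. ring. }
  lra.
Qed.

Theorem corollary1p1 (n : nat) (P : nat -> nat -> nat)
  (HP : lagrangian_hypercube n P)
  (z x w y : R -> R)
  (Hzx : corner_smoothing (Vzx P) (2 * n) z x)
  (Hzx_lag : lagrangian_conditions z x)
  (Hwy : corner_smoothing (Vwy P) (2 * n) w y)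
  (Hwy_lag : lagrangian_conditions w y)
  (a b : Z) (s u : R -> R)
  (Hs : forall t, 0 <= t <= 1 -> continuous s t)
  (Hu : forall t, 0 <= t <= 1 -> continuous u t)
  (Hs1 : s 1 = s 0 + 2 * PI * IZR a)
  (Hu1 : u 1 = u 0 + 2 * PI * IZR b) :
  maslov_index_is (fun t => torus_frame z x w y (s t) (u t))
    (2 * IZR a * grid_winding (Vzx P) (2 * n)
     + 2 * IZR b * grid_winding (Vwy P) (2 * n)).
Proof.
  destruct HP as (_ & [HGzx _] & [HGwy _] & _).
  destruct (smoothing_angle_exists _ _ _ _ Hzx) as (Az & HAzc & HAz).
  destruct (smoothing_angle_exists _ _ _ _ Hwy) as (Aw & HAwc & HAw).
  pose proof (periodic_shift_multiple Az _ _
    (smoothing_angle_period n _ _ _ Az HGzx Hzx HAzc HAz) a) as Wz.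
  pose proof (periodic_shift_multiple Aw _ _
    (smoothing_angle_period n _ _ _ Aw HGwy Hwy HAwc HAw) b) as Ww.
  destruct Hzx as (_ & _ & _ & Hreg_zx & _). destruct Hwy as (_ & _ & _ & Hreg_wy & _).
  apply (maslov_index_of_lift _ (fun t => 2 * Az (s t) + 2 * Aw (u t))).
  - split; intros t Ht.
    + apply (continuous_plus (fun t => 2 * Az (s t)) (fun t => 2 * Aw (u t))).
      * apply (continuous_mult (fun _ => 2) (fun t => Az (s t))); [apply continuous_const|].
        apply (continuous_comp s Az); auto.
      * apply (continuous_mult (fun _ => 2) (fun t => Aw (u t))); [apply continuous_const|].
        apply (continuous_comp u Aw); auto.
    + unfold torus_frame. simpl fst. simpl snd.
      destruct (HAz (s t)) as [-> ->]. destruct (HAw (u t)) as [-> ->].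
      apply souriau_polar; apply vnorm_pos; auto.
  - rewrite Hs1, Hu1, Wz, Ww. ring.
Qed.
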